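(* Let $U\subset\mathbb{R}^d$ be open and let $F,G:U\times[0,\infty)\to\mathbb{R}$ be, respectively, upper and lower semicontinuous. Assume that for a fixed $C>0$ and all $(x,t)\in U\times[0,\infty)$, $F(x,t)\le Ct$ and $G(x,t)\ge-Ct$, and that $\min(F_t,F)\le0$ and $\max(G_t,G)\ge0$ in the viscosity sense (in $U\times(0,\infty)$). Then $F\le0$ and $G\ge0$ on $U\times[0,\infty)$.
   Context: $\min(F_t,F)\le0$ in the viscosity sense means: whenever $\psi$ is smooth near a point $(x_0,t_0)$ (and Lipschitz elsewhere) and $F-\psi$ attains a (global) maximum value $0$ at $(x_0,t_0)$, then $F(x_0,t_0)\le0$ or $\psi_t(x_0,t_0)\le0$. $\max(G_t,G)\ge0$ in the viscosity sense means: whenever $\psi$ is such a test function and $G-\psi$ attains a (global) minimum value $0$ at $(x_0,t_0)$, then $G(x_0,t_0)\ge0$ or $\psi_t(x_0,t_0)\ge0$. *)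

From HB Require Import structures.
From mathcomp Require Import all_boot all_order all_algebra.
From mathcomp Require Import all_classical all_reals all_analysis.
Set Implicit Arguments. Unset Strict Implicit. Unset Printing Implicit Defensive.
Import Order.TTheory GRing.Theory Num.Theory.
Import numFieldNormedType.Exports.
Local Open Scope classical_set_scope.
Local Open Scope ring_scope.

Definition usc_on {T : topologicalType} {R : realType} (D : set T) (f : T -> R) :=
  forall p, D p -> forall e : R, 0 < e -> \forall q \near p, D q -> f q < f p + e.
Definition lsc_on {T : topologicalType} {R : realType} (D : set T) (f : T -> R) :=
  forall p, D p -> forall e : R, 0 < e -> \forall q \near p, D q -> f p - e < f q.

Fixpoint Ck_on {R : realType} {V : normedModType R} (k : nat) (A : set V)
    (f : V -> R) : Prop :=
  match k with
  | 0 => {within A, continuous f}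
  | k.+1 => {within A, continuous f} /\
            (forall x v, A x -> derivable f x v) /\
            (forall v, Ck_on k A (fun x => 'D_v f x))
  end.

Definition smooth_near {R : realType} {V : normedModType R} (f : V -> R) (p : V) :=
  exists A : set V, [/\ open A, A p & forall k, Ck_on k A f].

Definition lipschitz {R : realType} {V : normedModType R} (f : V -> R) :=
  exists L : R, forall p q, `|f p - f q| <= L * `|p - q|.

Definition test_fun {R : realType} {V : normedModType R} (psi : V -> R) (p : V) :=
  smooth_near psi p /\ lipschitz psi.

Definition dt {R : realType} {d : nat} (psi : 'rV[R]_d * R -> R) (x0 : 'rV[R]_d)
  (t0 : R) : R := derive1 (fun s : R => psi (x0, s)) t0.

Definition visc_min_sub {R : realType} {d : nat} (U : set 'rV[R]_d)
    (F : 'rV[R]_d * R -> R) :=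
  forall (psi : 'rV[R]_d * R -> R) (x0 : 'rV[R]_d) (t0 : R),
    U x0 -> 0 < t0 -> test_fun psi (x0, t0) ->
    (forall x t, U x -> 0 < t -> F (x, t) - psi (x, t) <= 0) ->
    F (x0, t0) - psi (x0, t0) = 0 ->
    F (x0, t0) <= 0 \/ dt psi x0 t0 <= 0.

Definition visc_max_super {R : realType} {d : nat} (U : set 'rV[R]_d)
    (G : 'rV[R]_d * R -> R) :=
  forall (psi : 'rV[R]_d * R -> R) (x0 : 'rV[R]_d) (t0 : R),
    U x0 -> 0 < t0 -> test_fun psi (x0, t0) ->
    (forall x t, U x -> 0 < t -> G (x, t) - psi (x, t) >= 0) ->
    G (x0, t0) - psi (x0, t0) = 0 ->
    G (x0, t0) >= 0 \/ dt psi x0 t0 >= 0.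

From Pilot Require Import Defs.
From HB Require Import structures.
From mathcomp Require Import all_boot all_order all_algebra.
From mathcomp Require Import all_classical all_reals all_analysis.
From mathcomp Require Import ring lra.
Set Implicit Arguments. Unset Strict Implicit. Unset Printing Implicit Defensive.
Import Order.TTheory GRing.Theory Num.Theory.
Import numFieldNormedType.Exports.
Local Open Scope classical_set_scope.
Local Open Scope ring_scope.

(* Suppose F (x0, t0) = a > 0 with t0 > 0.  Subtract from F the penalty
   psi (x, t) = ga t^2 + ka sum_i min ((x_i - x0_i)^2, de^2), with t^2 continued
   linearly beyond t = 2L.  The constants make F - psi equal to a/2 at (x0, t0) and
   smaller than a/2 off a compact box inside U x (0, 2L), so the upper semicontinuous
   F - psi attains its maximum M at a point (x1, t1) near which psi is a quadratic
   polynomial.  Then M + psi is an admissible test function touching F from above at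
   (x1, t1), while F (x1, t1) >= M >= a/2 > 0 and psi_t (x1, t1) = 2 ga t1 > 0,
   contradicting min (F_t, F) <= 0.  The claim for G is the claim for -G. *)

(** * Functions with constant iterated derivatives *)

Section polynomial_functions.
Variables (R : numFieldType) (V : normedModType R).

Lemma is_derive_quadratic (f : V -> R) (a v : V) (A B : R) :
  (forall h : R, f (h *: v + a) = f a + h * A + h ^+ 2 * B) -> is_derive a v f A.
Proof.
move=> fE.
have dq : (fun h : R => h^-1 *: ((f \o shift a) (h *: v) - f a)) @ 0^' --> A.
  have -> : A = A + 0 * B by rewrite mul0r addr0.
  apply: (@cvg_trans _ ((fun h : R => A + h * B) @ 0^')); last first.
    apply: cvg_within_filter; apply: cvgD; first exact: cvg_cst.
    by apply: cvgMr_tmp; exact: cvg_id.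
  apply: near_eq_cvg; near=> h.
  have h0 : h != 0 by near: h; exact: nbhs_dnbhs_neq.
  by rewrite /= fE [_ *: _]/GRing.scale /=; field.
by apply: DeriveDef; [apply/cvg_ex; exists A | exact: cvg_lim].
Unshelve. all: by end_near. Qed.

Fixpoint deg_le (n : nat) (f : V -> R) : Prop :=
  match n with
  | 0 => exists c, forall x, f x = c
  | n.+1 => [/\ continuous f, forall a v, derivable f a v &
                forall v, deg_le n (fun x => 'D_v f x)]
  end.

Lemma deg_le_cst n (c : R) : deg_le n (fun=> c).
Proof.
elim: n c => [|n IHn] c /=; first by exists c.
split=> [x|a v|v]; first exact: cvg_cst.
  exact: derivable_cst.
by under eq_fun do rewrite derive_cst; exact: IHn.
Qed.

Lemma deg_leS n f : deg_le n f -> deg_le n.+1 f.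
Proof.
elim: n f => [f [c fc]|n IHn f [fC fD fDv]].
  by rewrite (funext fc); exact: deg_le_cst.
by split=> // v; exact: IHn (fDv v).
Qed.

Lemma deg_le_continuous n f : deg_le n f -> continuous f.
Proof.
case: n => [[c fc]|n [//]].
by rewrite (funext fc) => x; exact: cvg_cst.
Qed.

Lemma deg_leD n f g : deg_le n f -> deg_le n g -> deg_le n (fun x => f x + g x).
Proof.
elim: n f g => [|n IHn] f g.
  by move=> [c fc] [e ge]; exists (c + e) => x; rewrite fc ge.
move=> [fC fD fDv] [gC gD gDv]; split=> [x|a v|v].
- exact: cvgD (fC x) (gC x).
- exact: derivableD.
have -> : (fun x => 'D_v (fun y => f y + g y) x) = (fun x => 'D_v f x + 'D_v g x).
  by apply: funext => x; exact: deriveD.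
exact: IHn (fDv v) (gDv v).
Qed.

Lemma deg_le_sum n k (F : 'I_k -> V -> R) :
  (forall i, deg_le n (F i)) -> deg_le n (fun x => \sum_(i < k) F i x).
Proof.
elim: k F => [|k IHk] F FP.
  by under eq_fun do rewrite big_ord0; exact: deg_le_cst.
under eq_fun do rewrite big_ord_recr /=.
by apply: deg_leD; [apply: IHk => i; exact: FP | exact: FP].
Qed.

Lemma deg_leZ n (c : R) f : deg_le n f -> deg_le n (fun x => c * f x).
Proof.
elim: n f => [f [e fe]|n IHn f [fC fD fDv]]; first by exists (c * e) => x; rewrite fe.
split=> [x|a v|v].
- exact: cvgM (cvg_cst c) (fC x).
- exact: derivableM (derivable_cst c a v) (fD a v).
have -> : (fun x => 'D_v (fun y => c * f y) x) = (fun x => c * 'D_v f x).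
  by apply: funext => x; exact: deriveMl.
exact: IHn (fDv v).
Qed.

Lemma deg_leM m n f g : deg_le m f -> deg_le n g -> deg_le (m + n) (fun x => f x * g x).
Proof.
elim: m n f g => [|m IHm] n f g.
  move=> [c fc] gn; rewrite add0n (funext (fun x => congr1 (fun y => y * g x) (fc x))).
  exact: deg_leZ.
elim: n g => [|n IHn] g fm.
  move=> [c gc]; rewrite addn0 (funext (fun x => congr1 (fun y => f x * y) (gc x))).
  under eq_fun do rewrite mulrC; exact: deg_leZ.
move=> gn; have [fC fD fDv] := fm; have [gC gD gDv] := gn.
rewrite addnS; split=> [x|a v|v].
- exact: cvgM (fC x) (gC x).
- exact: derivableM.
have -> : (fun x => 'D_v (fun y => f y * g y) x) =
          (fun x => f x * 'D_v g x + 'D_v f x * g x).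
  apply: funext => x; transitivity ('D_v (f * g) x) => //.
  by rewrite (deriveM (fD x v) (gD x v)) [g x *: _]mulrC.
apply: deg_leD; first exact: IHn _ fm (gDv v).
by rewrite addSnnS; exact: IHm _ _ _ (fDv v) gn.
Qed.

Lemma deg_le1_linear f : continuous f ->
  (forall (k : R) u w, f (k *: u + w) = k * f u + f w) -> deg_le 1 f.
Proof.
move=> fC fL.
have fD a v : is_derive a v f (f v).
  by apply: (is_derive_quadratic (B := 0)) => h; rewrite fL mulr0 addr0 addrC.
split=> [//|a v|v]; first by case: (fD a v).
by exists (f v) => x; case: (fD x v).
Qed.
End polynomial_functions.
Arguments deg_le_cst {R V}.

Section smooth_functions.
Variables (R : realType) (V : normedModType R).

Lemma deg_le_Ck k n (A : set V) f : deg_le n f -> Ck_on k A f.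
Proof.
elim: k n f => [|k IHk] n f fn.
  exact/continuous_subspaceT/(deg_le_continuous fn).
have [fC fD fDv] := deg_leS fn.
split; first exact: continuous_subspaceT.
by split=> [x v _|v]; [exact: fD | exact: IHk (fDv v)].
Qed.

Lemma Ck_on_eq k (A : set V) (f g : V -> R) : open A ->
  {in A, f =1 g} -> Ck_on k A g -> Ck_on k A f.
Proof.
move=> oA; elim: k f g => [|k IHk] f g fg /=.
  by apply: subspace_eq_continuous => x /fg.
have near_fg x : A x -> \forall y \near x, g y = f y.
  move=> Ax; apply: filterS (open_nbhs_nbhs (conj oA Ax)) => y Ay.
  by rewrite fg // inE.
move=> [gC [gD gDv]]; split.
  by apply: subspace_eq_continuous gC => x /fg.
split=> [x v Ax|v]; first exact: near_eq_derivable (near_fg x Ax) (gD x v Ax).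
apply: IHk (gDv v) => x; rewrite inE => Ax.
by apply: near_eq_derive; apply: filterS (near_fg x Ax) => y /esym.
Qed.
End smooth_functions.
Arguments deg_le_Ck {R V k n A f}.
Arguments Ck_on_eq {R V k A f g}.

Section lipschitz_functions.
Variables (R : realType) (V : normedModType R).
Implicit Types (f g : V -> R).

Lemma lipschitz_cst (c : R) : Defs.lipschitz (fun _ : V => c).
Proof. by exists 0 => p q; rewrite subrr normr0 mul0r. Qed.

Lemma lipschitzD f g :
  Defs.lipschitz f -> Defs.lipschitz g -> Defs.lipschitz (fun x => f x + g x).
Proof.
move=> [L fL] [M gM]; exists (L + M) => p q.
rewrite opprD addrACA mulrDl; apply: le_trans (ler_normD _ _) _.
exact: lerD.
Qed.

Lemma lipschitzZ (c : R) f : Defs.lipschitz f -> Defs.lipschitz (fun x => c * f x).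
Proof.
move=> [L fL]; exists (`|c| * L) => p q.
by rewrite -mulrBr normrM -mulrA ler_wpM2l.
Qed.

Lemma lipschitz_sum k (F : 'I_k -> V -> R) :
  (forall i, Defs.lipschitz (F i)) -> Defs.lipschitz (fun x => \sum_(i < k) F i x).
Proof.
elim: k F => [|k IHk] F FL.
  by under eq_fun do rewrite big_ord0; exact: lipschitz_cst.
under eq_fun do rewrite big_ord_recr /=.
by apply: lipschitzD; [apply: IHk => i; exact: FL | exact: FL].
Qed.

Lemma lipschitz_comp (g : V -> R) (h : R -> R) (L : R) :
  (forall p q, `|g p - g q| <= `|p - q|) ->
  (forall s r, `|h s - h r| <= L * `|s - r|) -> Defs.lipschitz (fun x => h (g x)).
Proof.
move=> gC hL; exists (Num.max L 0) => p q; apply: le_trans (hL _ _) _.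
apply: le_trans (_ : Num.max L 0 * `|g p - g q| <= _); last first.
  by apply: ler_wpM2l; [rewrite le_max lexx orbT | exact: gC].
by apply: ler_wpM2r; [exact: normr_ge0 | rewrite le_max lexx].
Qed.

Lemma lipschitz_continuous f : Defs.lipschitz f -> continuous f.
Proof.
move=> [L fL] p; apply/cvgrPdist_lt => e e0.
have L1 : 0 < Num.max L 0 + 1 by rewrite ltr_wpDl // le_max lexx orbT.
near=> q.
have pq : `|p - q| < e / (Num.max L 0 + 1).
  near: q; apply/nbhs_normP; exists (e / (Num.max L 0 + 1)); first exact: divr_gt0.
  by move=> q /=; rewrite distrC.
apply: le_lt_trans (fL p q) _.
apply: le_lt_trans (_ : (Num.max L 0 + 1) * `|p - q| < _); last first.
  by rewrite -ltr_pdivlMl // mulrC.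
by apply: ler_wpM2r; [exact: normr_ge0 | rewrite ler_wpDr // le_max lexx].
Unshelve. all: by end_near. Qed.
End lipschitz_functions.
Arguments lipschitz_cst {R V}.

(** * The penalty *)

Section capped_squares.
Variable R : realFieldType.
Implicit Types c s r t x y L : R.

Lemma ler_dist_min c x y : `|Num.min x c - Num.min y c| <= `|x - y|.
Proof.
wlog yx : x y / y <= x.
  move=> W; case: (leP y x) => [|/ltW]; first exact: W.
  by rewrite distrC (distrC x); exact: W.
rewrite (ger0_norm (_ : 0 <= x - y)) ?subr_ge0 // ler_norml.
by apply/andP; split; case: (leP x c); case: (leP y c); lra.
Qed.

Definition sqr_cap c s := Num.min (s ^+ 2) (c ^+ 2).

Lemma sqr_capE c s : 0 <= c -> sqr_cap c s = Num.min `|s| c ^+ 2.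
Proof.
move=> c0; rewrite /sqr_cap -(real_normK (num_real s)).
have s0 := normr_ge0 s.
case: (leP `|s| c) => sc; [rewrite min_l | rewrite min_r]; rewrite // ler_pXn2r ?nnegrE //.
exact: ltW.
Qed.

Lemma sqr_cap_ge0 c s : 0 <= sqr_cap c s.
Proof. by rewrite le_min !sqr_ge0. Qed.

Lemma sqr_cap_small c s : `|s| <= c -> sqr_cap c s = s ^+ 2.
Proof.
move=> sc; rewrite sqr_capE ?(le_trans (normr_ge0 s)) // min_l //.
exact: real_normK (num_real s).
Qed.

Lemma sqr_cap_large c s : 0 <= c -> c <= `|s| -> sqr_cap c s = c ^+ 2.
Proof. by move=> c0 cs; rewrite sqr_capE // min_r. Qed.

Lemma sqr_cap_lipschitz c s r : 0 <= c ->
  `|sqr_cap c s - sqr_cap c r| <= 2 * c * `|s - r|.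
Proof.
move=> c0; rewrite !sqr_capE //.
set a := Num.min `|s| c; set b := Num.min `|r| c.
have a0 : 0 <= a by rewrite /a le_min c0 normr_ge0.
have b0 : 0 <= b by rewrite /b le_min c0 normr_ge0.
have ac : a <= c by rewrite /a ge_min lexx orbT.
have bc : b <= c by rewrite /b ge_min lexx orbT.
have ab : `|a - b| <= `|s - r| := le_trans (ler_dist_min _ _ _) (ler_dist_dist _ _).
have -> : a ^+ 2 - b ^+ 2 = (a + b) * (a - b) by ring.
rewrite normrM (ger0_norm (addr_ge0 a0 b0)).
by apply: ler_pM => //; [exact: addr_ge0 | lra].
Qed.

Definition sqr_linext L t := 2 * L * t + sqr_cap L (t - L) - L ^+ 2.

Lemma sqr_linext_small L t : 0 <= t <= 2 * L -> sqr_linext L t = t ^+ 2.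
Proof.
move=> /andP[t0 t2L]; rewrite /sqr_linext sqr_cap_small; first by ring.
by rewrite ler_norml; apply/andP; split; lra.
Qed.

Lemma sqr_linext_large L t : 0 <= L -> 2 * L <= t -> sqr_linext L t = 2 * L * t.
Proof.
move=> L0 t2L; rewrite /sqr_linext sqr_cap_large //; first by ring.
by rewrite ger0_norm; lra.
Qed.

Lemma sqr_linext_ge0 L t : 0 <= L -> 0 <= t -> 0 <= sqr_linext L t.
Proof.
move=> L0 t0; case: (leP t (2 * L)) => tL.
  by rewrite sqr_linext_small ?sqr_ge0 // t0.
by rewrite sqr_linext_large ?(ltW tL) // !mulr_ge0.
Qed.

Lemma sqr_linext_lipschitz L t s : 0 <= L ->
  `|sqr_linext L t - sqr_linext L s| <= 4 * L * `|t - s|.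
Proof.
move=> L0; rewrite /sqr_linext.
have -> : 2 * L * t + sqr_cap L (t - L) - L ^+ 2 - (2 * L * s + sqr_cap L (s - L) - L ^+ 2)
  = 2 * L * (t - s) + (sqr_cap L (t - L) - sqr_cap L (s - L)) by ring.
apply: le_trans (ler_normD _ _) _.
have := sqr_cap_lipschitz (t - L) (s - L) L0.
rewrite (_ : t - L - (s - L) = t - s); last by ring.
rewrite normrM (ger0_norm (_ : 0 <= 2 * L)); last by rewrite mulr_ge0.
lra.
Qed.
End capped_squares.

Section space_time.
Variables (R : realType) (d : nat).
Local Notation V := ('rV[R]_d * R)%type.

Lemma rV_coord_le_norm (x : 'rV[R]_d) i : `|x ord0 i| <= `|x|.
Proof.
rewrite [leRHS]/Num.norm /= mx_normrE.
exact: (le_bigmax 0 (fun ij : 'I_1 * 'I_d => `|x ij.1 ij.2|) (ord0, i)).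
Qed.

Lemma rV_norm_lt (x : 'rV[R]_d) e : 0 < e -> (forall i, `|x ord0 i| < e) -> `|x| < e.
Proof.
move=> e0 xe; rewrite [ltLHS]/Num.norm /= mx_normrE.
by apply: bigmax_lt => // -[a i] _ /=; rewrite (ord1 a).
Qed.

Lemma ball_rV_coord (y x : 'rV[R]_d) e i : ball y e x -> `|x ord0 i - y ord0 i| < e.
Proof.
rewrite -ball_normE /= => yx; apply: le_lt_trans yx.
have -> : x ord0 i - y ord0 i = - (y - x) ord0 i by rewrite !mxE opprB.
by rewrite normrN rV_coord_le_norm.
Qed.

Lemma rV_coord_ball (y x : 'rV[R]_d) e : 0 < e ->
  (forall i, `|x ord0 i - y ord0 i| < e) -> ball y e x.
Proof.
move=> e0 xe; rewrite -ball_normE /=; apply: rV_norm_lt => // i.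
by rewrite !mxE distrC; exact: xe.
Qed.

Lemma ball_normR (c e s : R) : ball c e s = (`|s - c| < e).
Proof. by rewrite -ball_normE /= distrC. Qed.

Definition box (y : 'rV[R]_d) (de : R) : set 'rV[R]_d :=
  [set x | forall i, `|x ord0 i - y ord0 i| <= de].

Lemma box_compact y de : compact (box y de).
Proof.
have -> : box y de = [set x | forall i, `[y ord0 i - de, y ord0 i + de]%classic (x ord0 i)].
  by apply/seteqP; split=> x xy i; have := xy i; rewrite /= in_itv /= ler_distl.
by apply: (@rV_compact _ _ (fun i => `[y ord0 i - de, y ord0 i + de]%classic)) => i;
  exact: segment_compact.
Qed.

Lemma open_box (U : set 'rV[R]_d) y : open U -> U y ->
  exists2 de : R, 0 < de & box y de `<=` U.
Proof.
move=> oU Uy; have /nbhs_ballP[r r_gt0 rU] := open_nbhs_nbhs (conj oU Uy).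
exists (r / 2) => [|x xr]; first by rewrite divr_gt0.
apply: rU; apply: rV_coord_ball => // i; apply: le_lt_trans (xr i) _.
by rewrite ltr_pdivrMr // ltr_pMr // ltr1n.
Qed.

Lemma snd_le_norm (p : V) : `|p.2| <= `|p|.
Proof. by rewrite prod_normE le_max lexx orbT. Qed.

Lemma coord_le_norm (p : V) i : `|p.1 ord0 i| <= `|p|.
Proof.
by apply: le_trans (rV_coord_le_norm _ _) _; rewrite prod_normE le_max lexx.
Qed.

Lemma deg_le_snd : deg_le 1 (fun p : V => p.2).
Proof. by apply: deg_le1_linear => // p; exact: cvg_snd. Qed.

Lemma deg_le_coord i : deg_le 1 (fun p : V => p.1 ord0 i).
Proof.
apply: deg_le1_linear => [p|k u w]; last by rewrite !mxE.
apply: (@continuous_comp _ _ _ fst (fun x : 'rV[R]_d => x ord0 i)).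
  exact: cvg_fst.
exact: coord_continuous.
Qed.

Definition penalty_poly (al ga ka : R) (y : 'rV[R]_d) (p : V) : R :=
  al + ga * p.2 ^+ 2 + ka * \sum_(i < d) (p.1 ord0 i - y ord0 i) ^+ 2.

Lemma deg_le_penalty_poly al ga ka y : deg_le 2 (penalty_poly al ga ka y).
Proof.
have affine i : deg_le 1 (fun p : V => p.1 ord0 i - y ord0 i).
  exact: deg_leD (deg_le_coord i) (deg_le_cst 1 _).
have square i := deg_leM (affine i) (affine i).
exact: deg_leD (deg_leD (deg_le_cst 2 al) (deg_leZ ga (deg_leM deg_le_snd deg_le_snd)))
               (deg_leZ ka (deg_le_sum square)).
Qed.

Definition box_penalty (de : R) (y x : 'rV[R]_d) : R :=
  \sum_(i < d) sqr_cap de (x ord0 i - y ord0 i).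

Lemma box_penalty_ge0 de y x : 0 <= box_penalty de y x.
Proof. by apply: sumr_ge0 => i _; exact: sqr_cap_ge0. Qed.

Lemma box_penalty_center de y : box_penalty de y y = 0.
Proof. by apply: big1 => i _; rewrite subrr /sqr_cap expr0n /= min_l // sqr_ge0. Qed.

Lemma box_penalty_far de (y x : 'rV[R]_d) i :
  0 <= de -> de <= `|x ord0 i - y ord0 i| -> de ^+ 2 <= box_penalty de y x.
Proof.
move=> de0 far; rewrite /box_penalty (bigD1 i) //= sqr_cap_large // lerDl.
by apply: sumr_ge0 => j _; exact: sqr_cap_ge0.
Qed.

Definition penalty (al ga L ka de : R) (y : 'rV[R]_d) (p : V) : R :=
  al + ga * sqr_linext L p.2 + ka * box_penalty de y p.1.

Lemma penalty_ge al ga L ka de y p : 0 <= ga -> 0 <= L -> 0 <= ka -> 0 <= p.2 ->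
  al <= penalty al ga L ka de y p.
Proof.
move=> ga0 L0 ka0 t0; rewrite /penalty -addrA lerDl.
by rewrite addr_ge0 ?mulr_ge0 ?sqr_linext_ge0 ?box_penalty_ge0.
Qed.

Definition quadratic_zone (L de : R) (y : 'rV[R]_d) : set V :=
  [set p | ball L L p.2 /\ ball y de p.1].

Lemma quadratic_zone_open L de y : open (quadratic_zone L de y).
Proof.
apply: openI; apply: open_comp; try exact: ball_open.
- by move=> p _; exact: cvg_snd.
- by move=> p _; exact: cvg_fst.
Qed.

Lemma penalty_on_zone al ga L ka de y p : quadratic_zone L de y p ->
  penalty al ga L ka de y p = penalty_poly al ga ka y p.
Proof.
move=> [+ /ball_rV_coord yp]; rewrite ball_normR ltr_norml => /andP[tL1 tL2].
rewrite /penalty /penalty_poly /box_penalty sqr_linext_small; last by apply/andP; split; lra.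
congr (_ + _ * _); apply: eq_bigr => i _.
exact/sqr_cap_small/ltW/yp.
Qed.

Lemma penalty_lipschitz al ga L ka de y : 0 <= L -> 0 <= de ->
  Defs.lipschitz (penalty al ga L ka de y).
Proof.
move=> L0 de0.
have snd1 (p q : V) : `|p.2 - q.2| <= `|p - q| := snd_le_norm (p - q).
have coord1 i (p q : V) : `|p.1 ord0 i - q.1 ord0 i| <= `|p - q|.
  by have := coord_le_norm (p - q) i; rewrite /= !mxE.
apply: lipschitzD; first apply: lipschitzD.
- exact: lipschitz_cst.
- apply/lipschitzZ/(lipschitz_comp snd1) => s r.
  exact: sqr_linext_lipschitz.
rewrite /box_penalty; apply/lipschitzZ/lipschitz_sum => i.
apply: (lipschitz_comp (h := fun s => sqr_cap de (s - y ord0 i)) (L := 2 * de) (coord1 i)).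
move=> s r.
have := sqr_cap_lipschitz (s - y ord0 i) (r - y ord0 i) de0.
by rewrite (_ : s - y ord0 i - (r - y ord0 i) = s - r) //; ring.
Qed.

Lemma penalty_test_fun al ga L ka de y p : 0 <= L -> 0 <= de ->
  quadratic_zone L de y p -> test_fun (penalty al ga L ka de y) p.
Proof.
move=> L0 de0 zp; split; last exact: penalty_lipschitz.
exists (quadratic_zone L de y); split=> // [|k]; first exact: quadratic_zone_open.
apply: (Ck_on_eq (g := penalty_poly al ga ka y)).
- exact: quadratic_zone_open.
- by move=> q; rewrite inE; exact: penalty_on_zone.
- exact: deg_le_Ck (deg_le_penalty_poly al ga ka y).
Qed.

Lemma dt_penalty al ga L ka de y x t : quadratic_zone L de y (x, t) ->
  dt (penalty al ga L ka de y) x t = 2 * ga * t.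
Proof.
move=> [tL xy]; rewrite /dt derive1E.
have near_poly : \forall s \near t,
    penalty al ga L ka de y (x, s) = penalty_poly al ga ka y (x, s).
  apply: filterS (open_nbhs_nbhs (conj (ball_open L L) tL)) => s sL.
  exact: penalty_on_zone.
rewrite (near_eq_derive _ near_poly); apply: derive_val.
apply: (is_derive_quadratic (B := ga)) => h.
rewrite /penalty_poly /= [_ *: _]/GRing.scale /=; ring.
Qed.
End space_time.

(** * The penalization argument *)

Section semicontinuity.
Variables (R : realType) (T : topologicalType).

Lemma usc_onB (D : set T) (f g : T -> R) :
  usc_on D f -> continuous g -> usc_on D (fun p => f p - g p).
Proof.
move=> uf cg p Dp e e0.
have e2 : 0 < e / 2 by rewrite divr_gt0.
near=> q => Dq.
have fq : D q -> f q < f p + e / 2 by near: q; exact: uf p Dp _ e2.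
have : `|g p - g q| < e / 2 by near: q; exact: (cvgrPdist_lt _ _).1 (cg p) _ e2.
by move: (fq Dq); rewrite ltr_norml => fqe /andP[]; lra.
Unshelve. all: by end_near. Qed.

Lemma usc_on_compact_max (K D : set T) (f : T -> R) :
  compact K -> K `<=` D -> usc_on D f -> K !=set0 ->
  (exists B, forall x, K x -> f x <= B) ->
  exists2 p, K p & forall q, K q -> f q <= f p.
Proof.
(* The sets {f > sup f(K) - e} of K form a proper filter base; by upper
   semicontinuity, a cluster point of it attains the supremum. *)
move=> cK KD uf [x0 Kx0] [B fB].
have supK : has_sup (f @` K).
  by split; [exists (f x0), x0 | exists B => _ [x Kx <-]; exact: fB].
set S := sup (f @` K).
pose near_sup e := [set q | K q /\ S - e < f q].
have FF : ProperFilter (filter_from [set e : R | 0 < e] near_sup).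
  apply: filter_from_proper; last first.
    by move=> e e0; have [_ [x Kx <-] Sx] := sup_adherent e0 supK; exists x.
  apply: filter_from_filter; first by exists 1; exact: ltr01.
  move=> e1 e2 e10 e20; exists (Num.min e1 e2); first by rewrite /= lt_min e10 e20.
  by move=> q [Kq Sq]; split; split=> //; apply: le_lt_trans Sq;
    rewrite lerB // ge_min lexx ?orbT.
have KF : filter_from [set e : R | 0 < e] near_sup K by exists 1; [exact: ltr01 | move=> q []].
have [p [Kp clp]] := cK _ FF KF.
exists p => // q Kq; apply: le_trans (sup_upper_bound supK (ex_intro2 _ _ q Kq erefl)) _.
rewrite leNgt; apply/negP => fpS.
have e0 : 0 < (S - f p) / 2 by rewrite divr_gt0 // subr_gt0.
have Fe : filter_from [set e : R | 0 < e] near_sup (near_sup ((S - f p) / 2)).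
  by exists ((S - f p) / 2).
have [z [[Kz Sz] fz]] := clp _ _ Fe (uf p (KD p Kp) _ e0).
by have := fz (KD z Kz); lra.
Qed.
End semicontinuity.

Section penalization.
Variables (R : realType) (d : nat) (U : set 'rV[R]_d) (F : 'rV[R]_d * R -> R) (C : R).
Hypotheses (C_gt0 : 0 < C)
  (uF : usc_on [set p : 'rV[R]_d * R | U p.1 /\ 0 <= p.2] F)
  (FC : forall x t, U x -> 0 <= t -> F (x, t) <= C * t).
(* ga (2 L) = C: beyond t = 2L the time penalty is C t, which dominates F;
   ka de^2 = 2 C L: off the box the space penalty exceeds C t for t < 2L;
   ga t0^2 = a/2: F - psi0 is a/2 at (x0, t0). *)
Variables (x0 : 'rV[R]_d) (t0 de L ga ka : R).
Hypotheses (t0_gt0 : 0 < t0) (de_gt0 : 0 < de) (L_gt0 : 0 < L) (ga_gt0 : 0 < ga)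
  (ka_gt0 : 0 < ka) (gaL : ga * (2 * L) = C) (kade : ka * de ^+ 2 = 2 * C * L)
  (ga_t0 : ga * t0 ^+ 2 = F (x0, t0) / 2)
  (boxU : box x0 de `<=` U).

Local Notation a := (F (x0, t0)).
Local Notation psi0 := (penalty 0 ga L ka de x0).

Let Ux0 : U x0.
Proof. by apply: boxU => i; rewrite subrr normr0 ltW. Qed.

Let aE : a = 2 * ga * t0 ^+ 2.
Proof. by rewrite -mulrA ga_t0; field. Qed.

Let a_gt0 : 0 < a.
Proof. by rewrite aE !mulr_gt0 ?exprn_gt0. Qed.

Let t0_le : t0 <= 2 * L.
Proof.
have := FC Ux0 (ltW t0_gt0); rewrite aE -gaL => le.
suff : t0 <= L by have := L_gt0; lra.
rewrite -(ler_pM2l (_ : 0 < 2 * ga * t0)) ?mulr_gt0 //.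
by move: le; rewrite expr2; nra.
Qed.

Let psi0E x t : psi0 (x, t) = ga * sqr_linext L t + ka * box_penalty de x0 x.
Proof. by rewrite /penalty add0r. Qed.

Let psi0_ge0 x t : 0 <= t -> 0 <= psi0 (x, t).
Proof. by move=> t_ge0; apply: penalty_ge => //; exact: ltW. Qed.

Lemma penalized_center : a - psi0 (x0, t0) = a / 2.
Proof.
rewrite psi0E box_penalty_center sqr_linext_small ?t0_le ?ltW // ga_t0.
by field.
Qed.

Lemma penalized_superlevel x t : U x -> 0 < t -> a / 2 <= F (x, t) - psi0 (x, t) ->
  [/\ t < 2 * L, a / 2 <= C * t & forall i, `|x ord0 i - x0 ord0 i| < de].
Proof.
move=> Ux t_gt0; rewrite psi0E => aPhi.
have Ft := FC Ux (ltW t_gt0).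
have a0 := a_gt0.
have kbox : 0 <= ka * box_penalty de x0 x.
  by apply: mulr_ge0; [exact: ltW | exact: box_penalty_ge0].
have t_lt : t < 2 * L.
  rewrite ltNge; apply/negP => tL; move: aPhi.
  by rewrite sqr_linext_large ?(ltW L_gt0) // mulrA gaL; lra.
have gat : 0 <= ga * sqr_linext L t.
  by apply: mulr_ge0; [exact: ltW | exact: sqr_linext_ge0 (ltW L_gt0) (ltW t_gt0)].
split=> // [|i]; first lra.
rewrite ltNge; apply/negP => far.
have : ka * de ^+ 2 <= ka * box_penalty de x0 x.
  by rewrite ler_pM2l //; exact: box_penalty_far (ltW de_gt0) far.
have : C * t < C * (2 * L) by rewrite ltr_pM2l.
rewrite kade; lra.
Qed.

Local Notation K := (box x0 de `*` `[a / (2 * C), 2 * L]%classic).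

Let aC_gt0 : 0 < a / (2 * C).
Proof. by apply: divr_gt0 a_gt0 _; have := C_gt0; lra. Qed.

Let K_sub : K `<=` [set p | U p.1 /\ 0 < p.2].
Proof.
move=> [x t] [/boxU Ux]; rewrite /= in_itv /= => /andP[t_ge _]; split=> //.
exact: lt_le_trans aC_gt0 t_ge.
Qed.

Let superlevel_sub_K x t :
  U x -> 0 < t -> a / 2 <= F (x, t) - psi0 (x, t) -> K (x, t).
Proof.
move=> Ux t_gt0 /(penalized_superlevel Ux t_gt0)[t_lt aCt x_near]; split=> [i|/=].
  exact/ltW/x_near.
have C2_gt0 : 0 < 2 * C by have := C_gt0; lra.
by rewrite in_itv /= ler_pdivrMr // (ltW t_lt) andbT; lra.
Qed.

Let K_bounded : exists B, forall p, K p -> F p - psi0 p <= B.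
Proof.
exists (C * (2 * L)) => -[x t] /[dup] /K_sub[/= Ux t_gt0] [_]; rewrite /= in_itv /=.
move=> /andP[_ t_le]; have := psi0_ge0 x (ltW t_gt0); have := FC Ux (ltW t_gt0).
have : C * t <= C * (2 * L) by rewrite ler_pM2l.
lra.
Qed.

Lemma penalized_max : exists x1 t1,
  [/\ U x1, 0 < t1, quadratic_zone L de x0 (x1, t1),
      a / 2 <= F (x1, t1) - psi0 (x1, t1) &
      forall x t, U x -> 0 < t -> F (x, t) - psi0 (x, t) <= F (x1, t1) - psi0 (x1, t1)].
Proof.
have K_compact : compact K.
  by apply: compact_setX; [exact: box_compact | exact: segment_compact].
have usc_Phi := usc_onB uF (lipschitz_continuous (penalty_lipschitz 0 ga ka x0
  (ltW L_gt0) (ltW de_gt0))).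
have Kx0 : K (x0, t0) by apply: superlevel_sub_K; rewrite ?penalized_center.
have K_sub_dom : K `<=` [set p | U p.1 /\ 0 <= p.2] by move=> p /K_sub[? /ltW].
have [[x1 t1] Kp1 Phi_max] :=
  usc_on_compact_max K_compact K_sub_dom usc_Phi (ex_intro _ _ Kx0) K_bounded.
have Phi1 : a / 2 <= F (x1, t1) - psi0 (x1, t1).
  by rewrite -penalized_center; exact: Phi_max.
have [Ux1 t1_gt0] : U x1 /\ 0 < t1 := K_sub Kp1.
have [t1_lt _ x1_near] := penalized_superlevel Ux1 t1_gt0 Phi1.
exists x1, t1; split=> // [|x t Ux t_gt0].
  split; last exact: rV_coord_ball.
  by rewrite /= ball_normR ltr_norml; apply/andP; split; have := L_gt0; lra.
have := Phi1; case: (ltP (F (x, t) - psi0 (x, t)) (a / 2)) => [|/superlevel_sub_K]; first lra.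
by move=> /(_ Ux t_gt0) /Phi_max.
Qed.

Lemma visc_min_sub_absurd : visc_min_sub U F -> False.
Proof.
move=> vF; have [x1 [t1 [Ux1 t1_gt0 zone1 Phi1 Phi_max]]] := penalized_max.
have [M ME] : {M | M = F (x1, t1) - psi0 (x1, t1)} by eexists.
have psiE p : penalty M ga L ka de x0 p = M + psi0 p by rewrite /penalty; ring.
have below x t : U x -> 0 < t -> F (x, t) - penalty M ga L ka de x0 (x, t) <= 0.
  by move=> Ux t_gt0; rewrite psiE; have := Phi_max x t Ux t_gt0; lra.
have touch : F (x1, t1) - penalty M ga L ka de x0 (x1, t1) = 0.
  by rewrite psiE ME; ring.
have psi_test := penalty_test_fun M ga ka (ltW L_gt0) (ltW de_gt0) zone1.
case: (vF _ x1 t1 Ux1 t1_gt0 psi_test below touch) => [F1|].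
- by have := psi0_ge0 x1 (ltW t1_gt0); have := a_gt0; lra.
- rewrite dt_penalty //.
  by have := mulr_gt0 (mulr_gt0 (ltr0Sn R 1) ga_gt0) t1_gt0; lra.
Qed.
End penalization.

Lemma visc_min_sub_le0 (R : realType) (d : nat) (U : set 'rV[R]_d)
    (F : 'rV[R]_d * R -> R) (C : R) :
  open U -> 0 < C ->
  usc_on [set p : 'rV[R]_d * R | U p.1 /\ 0 <= p.2] F ->
  (forall x t, U x -> 0 <= t -> F (x, t) <= C * t) ->
  visc_min_sub U F -> forall x t, U x -> 0 <= t -> F (x, t) <= 0.
Proof.
move=> oU C0 uF FC vF x0 t0 Ux0; rewrite le_eqVlt => /predU1P[<-|t0_gt0].
  by have := FC x0 0 Ux0 (lexx 0); rewrite mulr0.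
rewrite leNgt; apply/negP => a_gt0.
have [de de_gt0 boxU] := open_box oU Ux0.
have t0_2 : 0 < t0 ^+ 2 := exprn_gt0 2 t0_gt0.
pose L := C * t0 ^+ 2 / F (x0, t0); pose ga := F (x0, t0) / (2 * t0 ^+ 2).
have L_gt0 : 0 < L by apply: divr_gt0 => //; exact: mulr_gt0.
apply: (visc_min_sub_absurd (L := L) (ga := ga) (ka := 2 * C * L / de ^+ 2)
  C0 uF FC t0_gt0 de_gt0 L_gt0 _ _ _ _ _ boxU vF).
- by apply: divr_gt0 => //; exact: mulr_gt0.
- apply: divr_gt0; last exact: exprn_gt0.
  by apply: mulr_gt0 => //; exact: mulr_gt0 (ltr0Sn R 1) C0.
- by rewrite /ga /L; field; rewrite !gt_eqF.
- by field; rewrite gt_eqF ?exprn_gt0.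
- by rewrite /ga; field; rewrite gt_eqF.
Qed.

(** * From supersolutions to subsolutions *)

Section negation.
Variable R : realType.

Lemma Ck_onN (V : normedModType R) k (A : set V) (f : V -> R) : open A ->
  Ck_on k A f -> Ck_on k A (fun x => - f x).
Proof.
move=> oA; elim: k f => [|k IHk] f /=; first by move=> fC x; apply: cvgN; exact: fC.
move=> [fC [fD fDv]]; split; first by move=> x; apply: cvgN; exact: fC.
split=> [x v Ax|v]; first exact: derivableN (fD x v Ax).
apply: (Ck_on_eq (g := fun x => - 'D_v f x) oA); last exact: IHk (fDv v).
by move=> x; rewrite inE => Ax; exact: deriveN (fD x v Ax).
Qed.

Lemma test_funN (V : normedModType R) (psi : V -> R) p :
  test_fun psi p -> test_fun (fun q => - psi q) p.
Proof.
move=> [[A [oA Ap psiC]] [L psiL]]; split.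
  by exists A; split=> // k; exact: Ck_onN.
by exists L => a b; rewrite -opprD normrN.
Qed.

Lemma dtN d (psi : 'rV[R]_d * R -> R) x t : derivable psi (x, t) (0, 1) ->
  dt (fun p => - psi p) x t = - dt psi x t.
Proof.
have dtE phi : dt phi x t = 'D_(0, 1) phi (x, t).
  rewrite /dt derive1E /derive; congr (lim (_ @ 0^')); apply: funext => h /=.
  congr (_ *: (phi _ - _)); congr (_, _).
  have -> : (h *: ((0, 1) : 'rV[R]_d * R)).1 = h *: 0 by [].
  by rewrite scaler0 add0r.
by move=> psiD; rewrite !dtE; exact: deriveN.
Qed.

Lemma usc_onN (T : topologicalType) (D : set T) (G : T -> R) :
  lsc_on D G -> usc_on D (fun p => - G p).
Proof.
move=> lG p Dp e e0; apply: filterS (lG p Dp e e0) => q Gq Dq.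
by have := Gq Dq; lra.
Qed.

Lemma visc_min_subN d (U : set 'rV[R]_d) (G : 'rV[R]_d * R -> R) :
  visc_max_super U G -> visc_min_sub U (fun p => - G p).
Proof.
move=> vG psi x0 t0 Ux0 t0_gt0 psi_test Gpsi_le Gpsi_eq.
have [[A [_ Ap /(_ 1%N) [_ [psiD _]]]] _] := psi_test.
have := vG _ x0 t0 Ux0 t0_gt0 (test_funN psi_test).
rewrite dtN; last exact: psiD _ _ Ap.
case=> [x t Ux tpos|||]; [by have := Gpsi_le x t Ux tpos; lra | lra | left; lra | right; lra].
Qed.
End negation.

Theorem lemma3p3 (R : realType) (d : nat) (U : set 'rV[R]_d)
    (F G : 'rV[R]_d * R -> R) (C : R) :
  open U -> 0 < C ->
  usc_on [set p : 'rV[R]_d * R | U p.1 /\ 0 <= p.2] F ->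
  lsc_on [set p : 'rV[R]_d * R | U p.1 /\ 0 <= p.2] G ->
  (forall (x : 'rV[R]_d) (t : R), U x -> 0 <= t -> F (x, t) <= C * t) ->
  (forall (x : 'rV[R]_d) (t : R), U x -> 0 <= t -> G (x, t) >= - (C * t)) ->
  visc_min_sub U F -> visc_max_super U G ->
  (forall (x : 'rV[R]_d) (t : R), U x -> 0 <= t -> F (x, t) <= 0) /\
  (forall (x : 'rV[R]_d) (t : R), U x -> 0 <= t -> G (x, t) >= 0).
Proof.
move=> oU C0 uF lG FC GC vF vG; split; first exact: visc_min_sub_le0 oU C0 uF FC vF.
move=> x t Ux t_ge0; rewrite -oppr_le0.
apply: (visc_min_sub_le0 oU C0 (usc_onN lG) _ (visc_min_subN vG)) => // y s Uy s_ge0.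
by rewrite lerNl; exact: GC.
Qed.
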